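(* Let $n\in\mathbb{N}$ and $b_{n,i}(x)=\binom ni x^i(1-x)^{n-i}$ for $i=0,1,\dots,n$. Then \[ \sum_{i,j=0}^n\bigl(b_{n,i}(x)b_{n,j}(x)+b_{n,i}(y)b_{n,j}(y)-2b_{n,i}(x)b_{n,j}(y)\bigr)f\Bigl(\frac{i+j}{2n}\Bigr)\ge 0 \] for every convex continuous function $f:[0,1]\to\mathbb{R}$ and all $x,y\in[0,1]$. *)

From Stdlib Require Import Reals.
Open Scope R_scope.

Definition bern (n i : nat) (x : R) : R :=
  C n i * x ^ i * (1 - x) ^ (n - i).

Definition convex_on01 (f : R -> R) : Prop :=
  forall x y t : R, 0 <= x <= 1 -> 0 <= y <= 1 -> 0 <= t <= 1 ->
    f (t * x + (1 - t) * y) <= t * f x + (1 - t) * f y.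

Definition continuous_on01 (f : R -> R) : Prop :=
  forall x : R, 0 <= x <= 1 ->
    limit1_in f (fun y => 0 <= y <= 1) (f x) x.

(* The double sum in the statement; sum_f_R0 g n = g 0 + ... + g n. *)
Definition bern_sum (n : nat) (f : R -> R) (x y : R) : R :=
  sum_f_R0 (fun i =>
    sum_f_R0 (fun j =>
      (bern n i x * bern n j x + bern n i y * bern n j y
         - 2 * bern n i x * bern n j y)
      * f (INR (i + j) / (2 * INR n))) n) n.

From Stdlib Require Import Reals.
From mathcomp Require Import all_boot all_order all_algebra.
From mathcomp Require Import Rstruct ring lra zify.
Import Order.TTheory GRing.Theory Num.Theory.
Open Scope R_scope.

(* Write a_i, b_i for the Bernstein weights at x and y and d_i = a_i - b_i.
   The cross terms a_i b_j - a_j b_i cancel by symmetry, leaving the Hankel form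
   sum d_i d_j g(i+j) with g k = f(k/2n).  Two Abel summations turn it into
   sum e_i e_j (g(i+j) - 2 g(i+j+1) + g(i+j+2)), where e_k = sum_(l <= k) d_l is the
   difference of the binomial distribution functions at x and y.  The second
   differences are nonnegative by convexity, and e_i e_j >= 0 because the binomial
   distribution function is nonincreasing in the success probability, so all the
   e_k have the same sign. *)

Section HankelForms.
Local Open Scope ring_scope.

Lemma sum_by_parts (R : comPzRingType) (d h : nat -> R) n :
  \sum_(i < n.+1) d i * h i =
  \sum_(i < n) (\sum_(l < i.+1) d l) * (h i - h i.+1) + (\sum_(l < n.+1) d l) * h n.
Proof.
elim: n => [|n IHn]; first by rewrite !big_ord_recr !big_ord0 /=; ring.
rewrite big_ord_recr IHn /= [in RHS]big_ord_recr /=.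
rewrite [\sum_(l < n.+2) d l]big_ord_recr /=; ring.
Qed.

Lemma hankel_sum_diff (R : comPzRingType) n (a b g : nat -> R) :
  \sum_(i < n) \sum_(j < n) (a i * a j + b i * b j - 2 * a i * b j) * g (i + j)%N =
  \sum_(i < n) \sum_(j < n) (a i - b i) * (a j - b j) * g (i + j)%N.
Proof.
have swap_ab : \sum_(i < n) \sum_(j < n) a i * b j * g (i + j)%N =
               \sum_(i < n) \sum_(j < n) b i * a j * g (i + j)%N.
  rewrite exchange_big; apply: eq_bigr => i _; apply: eq_bigr => j _.
  by rewrite [a j * _]mulrC addnC.
have split_cross i :
    \sum_(j < n) (a i * a j + b i * b j - 2 * a i * b j) * g (i + j)%N =
    \sum_(j < n) (a i - b i) * (a j - b j) * g (i + j)%N +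
    (\sum_(j < n) b i * a j * g (i + j)%N - \sum_(j < n) a i * b j * g (i + j)%N).
  by rewrite -sumrB -big_split; apply: eq_bigr => j _ /=; ring.
under eq_bigr => i _ do rewrite split_cross.
by rewrite big_split sumrB /= swap_ab subrr addr0.
Qed.

Lemma hankel_form_ge0 (R : realDomainType) n (d g : nat -> R) :
  \sum_(l < n.+1) d l = 0 ->
  (forall i j, 0 <= (\sum_(l < i.+1) d l) * (\sum_(l < j.+1) d l)) ->
  (forall k, (k.+2 <= n.*2)%N -> g k.+1 *+ 2 <= g k + g k.+2) ->
  0 <= \sum_(i < n.+1) \sum_(j < n.+1) d i * d j * g (i + j)%N.
Proof.
set e := fun k => \sum_(l < k.+1) d l => e_n e_sign g_convex.
set dg := fun k => g k - g k.+1.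
have inner i : \sum_(j < n.+1) d i * d j * g (i + j)%N =
               d i * \sum_(j < n) e j * dg (i + j)%N.
  under eq_bigr => j _ do rewrite -mulrA.
  rewrite -mulr_sumr (sum_by_parts _ d (fun j => g (i + j)%N)) e_n mul0r addr0.
  by congr (_ * _); apply: eq_bigr => j _; rewrite /dg addnS.
under eq_bigr => i _ do rewrite inner.
rewrite (sum_by_parts _ d (fun i => \sum_(j < n) e j * dg (i + j)%N)) e_n mul0r addr0.
apply: sumr_ge0 => -[i lt_i_n] _; rewrite -sumrB mulr_sumr.
apply: sumr_ge0 => -[j lt_j_n] _ /=.
rewrite -mulrBr mulrA mulr_ge0 ?e_sign // /dg subr_ge0 addSn.
have /g_convex : ((i + j).+2 <= n.*2)%N by rewrite -addnn; lia.
lra.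
Qed.

End HankelForms.

Section BernsteinBasis.
Local Open Scope ring_scope.
Variable R : comPzRingType.
Implicit Types (p : R) (n l k : nat).

Definition bernstein (n l : nat) (p : R) : R :=
  'C(n, l)%:R * p ^+ l * (1 - p) ^+ (n - l).

Definition bernstein_cdf (n k : nat) (p : R) : R :=
  \sum_(l < k) bernstein n l p.

Lemma bernsteinS0 n p : bernstein n.+1 0 p = (1 - p) * bernstein n 0 p.
Proof. by rewrite /bernstein !bin0 !subn0 exprS; ring. Qed.

Lemma bernsteinSS n l p :
  bernstein n.+1 l.+1 p = (1 - p) * bernstein n l.+1 p + p * bernstein n l p.
Proof.
rewrite /bernstein binS natrD subSS.
have [lt_l_n | le_n_l] := ltnP l n.
  rewrite -(subnSK lt_l_n) !exprS.
  set a := p ^+ l; set b := (1 - p) ^+ _; ring.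
have -> : (n - l = 0)%N by apply/eqP.
rewrite bin_small ?ltnS // !exprS; set a := p ^+ l; ring.
Qed.

Lemma bernstein_cdfSS n k p :
  bernstein_cdf n.+1 k.+1 p = (1 - p) * bernstein_cdf n k.+1 p + p * bernstein_cdf n k p.
Proof.
rewrite /bernstein_cdf big_ord_recl bernsteinS0.
under eq_bigr => l _ do rewrite bernsteinSS.
by rewrite big_split /= -!mulr_sumr [in RHS]big_ord_recl addrA -mulrDr.
Qed.

Lemma bernstein_cdf_total n p : bernstein_cdf n n.+1 p = 1.
Proof.
rewrite /bernstein_cdf -(expr1n R n) -[1 in RHS](subrK p) exprDn.
by apply: eq_bigr => l _; rewrite /bernstein -mulr_natl; ring.
Qed.

End BernsteinBasis.

Arguments bernstein {R} n l p.
Arguments bernstein_cdf {R} n k p.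

Section BernsteinPositivity.
Local Open Scope ring_scope.
Variable R : realDomainType.
Implicit Types (p q x y : R) (n l k : nat).

Lemma bernstein_ge0 n l p : 0 <= p <= 1 -> 0 <= bernstein n l p.
Proof.
case/andP=> p_ge0 p_le1.
by rewrite /bernstein !mulr_ge0 ?exprn_ge0 ?subr_ge0.
Qed.

Lemma bernstein_cdf_leS n k p : 0 <= p <= 1 ->
  bernstein_cdf n k p <= bernstein_cdf n k.+1 p.
Proof.
by move=> p01; rewrite /bernstein_cdf big_ord_recr /= lerDl bernstein_ge0.
Qed.

Lemma bernstein_cdf_nonincreasing n k p q : 0 <= q -> q <= p -> p <= 1 ->
  bernstein_cdf n k p <= bernstein_cdf n k q.
Proof.
elim: n k => [|n IHn] [|k] q_ge0 le_qp p_le1; try by rewrite /bernstein_cdf !big_ord0.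
  apply: ler_sum => -[[|l] lt_l] _; first by rewrite /bernstein !expr0.
  by rewrite /bernstein bin0n !mul0r.
rewrite !bernstein_cdfSS.
have := IHn k.+1 q_ge0 le_qp p_le1; have := IHn k q_ge0 le_qp p_le1.
have : bernstein_cdf n k q <= bernstein_cdf n k.+1 q.
  by apply: bernstein_cdf_leS; rewrite q_ge0 (le_trans le_qp).
nra.
Qed.

Lemma bernstein_cdf_sub_mul_ge0 n i j x y : 0 <= x <= 1 -> 0 <= y <= 1 ->
  0 <= (bernstein_cdf n i x - bernstein_cdf n i y) *
       (bernstein_cdf n j x - bernstein_cdf n j y).
Proof.
case/andP=> x_ge0 x_le1 /andP[y_ge0 y_le1].
have [le_xy | /ltW le_yx] := lerP x y.
  have := bernstein_cdf_nonincreasing n i _ _ x_ge0 le_xy y_le1.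
  have := bernstein_cdf_nonincreasing n j _ _ x_ge0 le_xy y_le1; nra.
have := bernstein_cdf_nonincreasing n i _ _ y_ge0 le_yx x_le1.
have := bernstein_cdf_nonincreasing n j _ _ y_ge0 le_yx x_le1; nra.
Qed.

End BernsteinPositivity.

Definition grid_value (f : R -> R) (n k : nat) : R := f (INR k / (2 * INR n)).

Section RealBernstein.
Local Open Scope ring_scope.

Lemma C_binomial n l : (l <= n)%N -> C n l = 'C(n, l)%:R.
Proof.
move=> le_l_n; rewrite /C !RealsE -natrM -(bin_fact le_l_n) natrM mulfK //.
by rewrite pnatr_eq0 -lt0n muln_gt0 !fact_gt0.
Qed.

Lemma bern_bernstein n l p : (l <= n)%N -> bern n l p = bernstein n l p.
Proof. by move=> le_l_n; rewrite /bern /bernstein C_binomial // !RealsE. Qed.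

Lemma convex_on01_midpoint f a b : convex_on01 f -> 0 <= a <= 1 -> 0 <= b <= 1 ->
  f ((a + b) / 2) *+ 2 <= f a + f b.
Proof.
move=> f_convex /andP[/RleP a_ge0 /RleP a_le1] /andP[/RleP b_ge0 /RleP b_le1].
have half01 : Rle 0 (1 / 2) /\ Rle (1 / 2) 1.
  by split; apply/RleP; rewrite !RealsE /=; lra.
have /RleP := f_convex a b (1 / 2) (conj a_ge0 a_le1) (conj b_ge0 b_le1) half01.
rewrite !RealsE.
have -> : 1 / 2 * a + (1 - 1 / 2) * b = (a + b) / 2 by field.
lra.
Qed.

Lemma convex_on01_grid f n k : convex_on01 f -> (k.+2 <= n.*2)%N ->
  grid_value f n k.+1 *+ 2 <= grid_value f n k + grid_value f n k.+2.
Proof.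
move=> f_convex le_k2_2n; rewrite /grid_value !RealsE /=.
have n_gt0 : 0 < n%:R :> R by rewrite ltr0n; lia.
have grid_ge0 j : 0 <= j%:R / (2 * n%:R) :> R by rewrite divr_ge0 //; lra.
have grid_le1 j : (j <= n.*2)%N -> j%:R / (2 * n%:R) <= 1 :> R.
  move=> le_j_2n; have : j%:R <= (2 * n)%:R :> R by rewrite ler_nat mul2n.
  by rewrite natrM ler_pdivrMr ?mul1r //; lra.
have -> : k.+1%:R / (2 * n%:R) = (k%:R / (2 * n%:R) + k.+2%:R / (2 * n%:R)) / 2 :> R.
  by rewrite -[k.+2]addn2 -[k.+1]addn1 !natrD; field; lra.
by apply: convex_on01_midpoint => //; rewrite grid_ge0 grid_le1 //; lia.
Qed.

Lemma bern_sum_hankel n f x y :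
  bern_sum n f x y =
  \sum_(i < n.+1) \sum_(j < n.+1)
    (bernstein n i x - bernstein n i y) * (bernstein n j x - bernstein n j y) *
    grid_value f n (i + j)%N.
Proof.
rewrite -(hankel_sum_diff _ _ (bernstein n ^~ x) (bernstein n ^~ y)).
rewrite /bern_sum sum_f_R0E big_mkord; apply: eq_bigr => -[i lt_i] _.
rewrite sum_f_R0E big_mkord; apply: eq_bigr => -[j lt_j] _ /=.
by rewrite !bern_bernstein.
Qed.

End RealBernstein.

Theorem theorem3 (n : nat) (f : R -> R)
  (hconv : convex_on01 f) (hcont : continuous_on01 f)
  (x y : R) (hx : 0 <= x <= 1) (hy : 0 <= y <= 1) :
  0 <= bern_sum n f x y.
Proof.
have x01 : (0 <= x <= 1)%R by case: hx => /RleP -> /RleP ->.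
have y01 : (0 <= y <= 1)%R by case: hy => /RleP -> /RleP ->.
apply/RleP; rewrite bern_sum_hankel.
apply: (hankel_form_ge0 _ _ (fun l => bernstein n l x - bernstein n l y)).
- by rewrite sumrB -!/(bernstein_cdf n n.+1 _) !bernstein_cdf_total subrr.
- by move=> i j; rewrite !sumrB bernstein_cdf_sub_mul_ge0.
- by move=> k; apply: convex_on01_grid.
Qed.
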